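(* Let $0<\mu<L$, $q=\mu/L$, and define $A_0=0$, $A_{k+1}=\frac{(1+q)A_k+2\big(1+\sqrt{(1+A_k)(1+qA_k)}\big)}{(1-q)^2}$, $\delta_k=\sqrt{\frac{A_{k+1}}{1+qA_{k+1}}}$ and $\sigma_k=\sqrt{(1+A_k)(1+qA_k)}$ for $k\in\mathbb{N}_0$. Then for every $k\in\mathbb{N}_0$: $A_k\ge0$; $A_{k+1}>0$; $\delta_k>0$; $A_{k+1}-A_k\ge0$; $A_{k+1}-A_k+\sigma_{k+1}-\sigma_k\ge0$; $(1+q)A_{k+1}-A_k\ge0$; $(1+q)A_{k+1}-A_k-\sigma_k+1\ge0$; and $\sigma_k-1\ge0$. *)

From Stdlib Require Import Reals.
Open Scope R_scope.

Fixpoint Aseq (q : R) (k : nat) : R :=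
  match k with
  | O => 0
  | S k' => let a := Aseq q k' in
            ((1 + q) * a + 2 * (1 + sqrt ((1 + a) * (1 + q * a)))) / (1 - q) ^ 2
  end.

Definition deltaA (q : R) (k : nat) : R :=
  sqrt (Aseq q (S k) / (1 + q * Aseq q (S k))).

Definition sigmaA (q : R) (k : nat) : R :=
  sqrt ((1 + Aseq q k) * (1 + q * Aseq q k)).

(* Since 0 < q < 1, dividing by (1 - q)^2 <= 1 can only enlarge the numerator,
   so A_{k+1} >= (1 + q) A_k + 2 + 2 sigma_k. With A_k >= 0 this gives
   sigma_k >= 1 and A_{k+1} >= A_k + 4, and every inequality of the statement
   follows, using that sigma_k is a nondecreasing function of A_k. *)

From Stdlib Require Import Reals Lra.
Open Scope R_scope.

Lemma ratio_in_unit_interval (mu L : R) : 0 < mu -> mu < L -> 0 < mu / L < 1.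
Proof.
  intros Hmu HmuL; split.
  - apply Rdiv_lt_0_compat; lra.
  - apply Rmult_lt_reg_r with L; [lra |].
    rewrite Rmult_1_l, <- Rmult_div_swap, Rmult_div_l; lra.
Qed.

Lemma le_div_of_le_1 (x d : R) : 0 <= x -> 0 < d <= 1 -> x <= x / d.
Proof.
  intros Hx Hd.
  apply Rmult_le_reg_r with d; [lra |].
  rewrite <- Rmult_div_swap, Rmult_div_l; nra.
Qed.

Lemma one_le_sqrt_prod (q a : R) : 0 <= q -> 0 <= a ->
  1 <= sqrt ((1 + a) * (1 + q * a)).
Proof.
  intros Hq Ha.
  rewrite <- sqrt_1 at 1; apply sqrt_le_1_alt.
  assert (0 <= q * a) by (apply Rmult_le_pos; lra).
  assert (0 <= q * a * a) by (apply Rmult_le_pos; lra).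
  lra.
Qed.

Section Recurrence.

Variable q : R.
Hypothesis Hq : 0 < q < 1.

Lemma Aseq_nonneg (k : nat) : 0 <= Aseq q k.
Proof.
  induction k as [| k IH]; simpl; [lra |].
  assert (0 <= q * Aseq q k) by (apply Rmult_le_pos; lra).
  pose proof (sqrt_pos ((1 + Aseq q k) * (1 + q * Aseq q k))).
  unfold Rdiv; apply Rmult_le_pos; [nra |].
  apply Rlt_le, Rinv_0_lt_compat; nra.
Qed.

Lemma one_le_sigmaA (k : nat) : 1 <= sigmaA q k.
Proof. apply one_le_sqrt_prod; [lra | apply Aseq_nonneg]. Qed.

Lemma Aseq_S_lower_bound (k : nat) :
  (1 + q) * Aseq q k + 2 + 2 * sigmaA q k <= Aseq q (S k).
Proof.
  pose proof (Aseq_nonneg k) as Ha; pose proof (one_le_sigmaA k) as Hs.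
  unfold sigmaA in *; simpl.
  replace ((1 + q) * Aseq q k + 2 + 2 * sqrt ((1 + Aseq q k) * (1 + q * Aseq q k)))
    with ((1 + q) * Aseq q k + 2 * (1 + sqrt ((1 + Aseq q k) * (1 + q * Aseq q k))))
    by ring.
  apply le_div_of_le_1; nra.
Qed.

Lemma Aseq_le_S (k : nat) : Aseq q k + 4 <= Aseq q (S k).
Proof.
  pose proof (Aseq_S_lower_bound k); pose proof (one_le_sigmaA k).
  pose proof (Aseq_nonneg k); nra.
Qed.

Lemma sigmaA_le_S (k : nat) : sigmaA q k <= sigmaA q (S k).
Proof.
  pose proof (Aseq_nonneg k); pose proof (Aseq_le_S k).
  unfold sigmaA; apply sqrt_le_1_alt.
  assert (0 <= q * Aseq q k) by (apply Rmult_le_pos; lra).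
  apply Rmult_le_compat; nra.
Qed.

Lemma deltaA_pos (k : nat) : 0 < deltaA q k.
Proof.
  pose proof (Aseq_nonneg k); pose proof (Aseq_le_S k).
  unfold deltaA; apply sqrt_lt_R0, Rdiv_lt_0_compat; nra.
Qed.

End Recurrence.

Theorem lemma1 (mu L : R) (Hmu : 0 < mu) (HmuL : mu < L) (k : nat) :
  let q := mu / L in
  0 <= Aseq q k /\
  0 < Aseq q (S k) /\
  0 < deltaA q k /\
  0 <= Aseq q (S k) - Aseq q k /\
  0 <= Aseq q (S k) - Aseq q k + sigmaA q (S k) - sigmaA q k /\
  0 <= (1 + q) * Aseq q (S k) - Aseq q k /\
  0 <= (1 + q) * Aseq q (S k) - Aseq q k - sigmaA q k + 1 /\
  0 <= sigmaA q k - 1.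
Proof.
  intros q.
  assert (Hq : 0 < q < 1) by (apply ratio_in_unit_interval; assumption).
  pose proof (Aseq_nonneg q Hq k).
  pose proof (Aseq_S_lower_bound q Hq k).
  pose proof (Aseq_le_S q Hq k).
  pose proof (one_le_sigmaA q Hq k).
  pose proof (sigmaA_le_S q Hq k).
  pose proof (deltaA_pos q Hq k).
  repeat split; nra.
Qed.
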